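(* Every CSNC ring is an NCSUC ring; that is, if every clean element of $R$ is strongly nil-clean, then every nil-clean element of $R$ is uniquely strongly clean.
   Context: All rings are associative with identity $1$. For a ring $R$, $\mathrm{Id}(R)$, $U(R)$, $\mathrm{Nil}(R)$ denote the sets of idempotents, units and nilpotent elements. An element $a\in R$ is clean if $a=e+u$ for some $e\in\mathrm{Id}(R)$, $u\in U(R)$; it is uniquely strongly clean if there is exactly one $e\in\mathrm{Id}(R)$ such that $a-e\in U(R)$ and $ae=ea$. An element $a$ is nil-clean if $a=e+q$ with $e\in \mathrm{Id}(R)$, $q\in\mathrm{Nil}(R)$, and strongly nil-clean if moreover $eq=qe$. A ring is CSNC if every clean element is strongly nil-clean, and NCSUC if every nil-clean element is uniquely strongly clean. *)

From mathcomp Require Import all_boot all_algebra.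
Set Implicit Arguments. Unset Strict Implicit. Unset Printing Implicit Defensive.
Import GRing.Theory.
Local Open Scope ring_scope.

Section Defs.
Variable R : unitRingType.

Definition idem (e : R) : Prop := e * e = e.
Definition nilp (q : R) : Prop := exists n : nat, q ^+ n = 0.
Definition unitP (u : R) : Prop := u \is a GRing.unit.

Definition clean (a : R) : Prop := exists e u, idem e /\ unitP u /\ a = e + u.

Definition uniquely_strongly_clean (a : R) : Prop :=
  exists e, (idem e /\ unitP (a - e) /\ a * e = e * a) /\
    forall f, idem f -> unitP (a - f) -> a * f = f * a -> f = e.

Definition nil_clean (a : R) : Prop := exists e q, idem e /\ nilp q /\ a = e + q.

Definition strongly_nil_clean (a : R) : Prop :=
  exists e q, idem e /\ nilp q /\ a = e + q /\ e * q = q * e.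

Definition CSNC : Prop := forall a : R, clean a -> strongly_nil_clean a.
Definition NCSUC : Prop := forall a : R, nil_clean a -> uniquely_strongly_clean a.
End Defs.

From Pilot Require Import Defs.
From mathcomp Require Import all_boot all_algebra.

Set Implicit Arguments. Unset Strict Implicit. Unset Printing Implicit Defensive.
Import GRing.Theory.
Local Open Scope ring_scope.

(* In a CSNC ring every unit u = 0 + u is clean, hence strongly nil-clean, and
   this forces u to be unipotent.  If a = e + q is nil-clean, then
   a - 1 = e + (q - 1) is clean, so a - 1 = g + p strongly nil-clean, and g
   works for a since a - g = 1 + p.  Any other such idempotent f gives a unit
   a - f = 1 + r, i.e. a second strongly nil-clean decomposition a - 1 = f + r;
   such decompositions are unique, because for large K the idempotent is
   (g + p)^K (1 + p)^-K, which is absorbed by the other idempotent. *)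

Section Rings.
Variable R : unitRingType.
Implicit Types a e f g p q r u : R.

Lemma nilpN q : Defs.nilp q -> Defs.nilp (- q).
Proof. by case=> N qN; exists N; rewrite exprNn qN mulr0. Qed.

Lemma unitr1D_nilp q : Defs.nilp q -> unitP (1 + q).
Proof.
case=> N qN; set S := \sum_(i < N) (- q) ^+ i.
have qS : GRing.comm q S.
  by apply: commr_sum => i _; apply/commrX/commrN/commr_refl.
have inv : (1 + q) * S = 1.
  have -> : 1 + q = - (- q - 1) by rewrite opprB opprK.
  by rewrite mulNr -subrX1 exprNn qN mulr0 sub0r opprK.
apply/unitrP; exists S; split=> //.
have Sq1 : GRing.comm S (1 + q) by apply: commrD; [exact: commr1 | exact: commr_sym].
by rewrite Sq1.
Qed.

Lemma idem_compl e : idem e -> idem (1 - e).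
Proof. by rewrite /idem mulrBl mul1r mulrBr mulr1 => ->; rewrite subrr subr0. Qed.

Lemma mul_compl_idem e : idem e -> (1 - e) * e = 0.
Proof. by rewrite mulrBl mul1r => ->; rewrite subrr. Qed.

Section IdempotentPlusCommuting.
Variables e q : R.
Hypotheses (idem_e : idem e) (eq_comm : GRing.comm e q).

Lemma mul_idem_exprD n : e * (e + q) ^+ n = e * (1 + q) ^+ n.
Proof.
elim: n => [|n IHn]; first by rewrite !expr0.
have e_comm : GRing.comm e ((1 + q) ^+ n) by apply/commrX/commrD/eq_comm/commr1.
rewrite !exprSr !mulrA IHn !mulrDr mulr1.
by rewrite -[e * _ * e]mulrA -e_comm mulrA idem_e.
Qed.

Lemma mul_compl_exprD n : (1 - e) * (e + q) ^+ n = (1 - e) * q ^+ n.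
Proof.
elim: n => [|n IHn]; first by rewrite !expr0.
rewrite !exprSr !mulrA IHn mulrDr -mulrA -(commrX n eq_comm) mulrA.
by rewrite mul_compl_idem // mul0r add0r.
Qed.

Lemma exprD_idem_nil N : q ^+ N = 0 -> (e + q) ^+ N = e * (1 + q) ^+ N.
Proof.
move=> qN; have -> : (e + q) ^+ N = (1 - e) * (e + q) ^+ N + e * (e + q) ^+ N.
  by rewrite -mulrDl subrK mul1r.
by rewrite mul_compl_exprD qN mulr0 add0r mul_idem_exprD.
Qed.

Lemma idem_mul_exprD_nil N : q ^+ N = 0 -> e * (e + q) ^+ N = (e + q) ^+ N.
Proof. by move=> qN; rewrite exprD_idem_nil // mulrA idem_e. Qed.

End IdempotentPlusCommuting.

Lemma snc_idem_absorb f r g p :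
    idem f -> GRing.comm f r -> Defs.nilp r ->
    idem g -> GRing.comm g p -> Defs.nilp p ->
  f + r = g + p -> f * g = g.
Proof.
move=> ff fr [M rM] gg gp [N pN] frE.
have rK : r ^+ (M + N) = 0 by rewrite exprD rM mul0r.
have pK : p ^+ (M + N) = 0 by rewrite addnC exprD pN mul0r.
have unit_pK : (1 + p) ^+ (M + N) \is a GRing.unit.
  by apply/unitrX/unitr1D_nilp; exists N.
have gE : g = (g + p) ^+ (M + N) / (1 + p) ^+ (M + N).
  by rewrite exprD_idem_nil // mulrK.
by rewrite gE mulrA -frE idem_mul_exprD_nil.
Qed.

Lemma snc_idem_unique f r g p :
    idem f -> GRing.comm f r -> Defs.nilp r ->
    idem g -> GRing.comm g p -> Defs.nilp p ->
  f + r = g + p -> f = g.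
Proof.
move=> ff fr r_nil gg gp p_nil frE.
have fg : f * g = g := snc_idem_absorb ff fr r_nil gg gp p_nil frE.
have compl_comm e q : GRing.comm e q -> GRing.comm (1 - e) (- q).
  by move=> eq; apply/commrN/commr_sym/commrB; [exact: commr1 | exact: commr_sym].
(* absorption for 1 - (f + r) = (1 - f) - r gives f * g = f *)
have := snc_idem_absorb (idem_compl ff) (compl_comm _ _ fr) (nilpN r_nil)
  (idem_compl gg) (compl_comm _ _ gp) (nilpN p_nil).
rewrite -!addrA -!opprD frE => /(_ erefl).
rewrite mulrBl mul1r mulrBr mulr1 fg opprB addrA subrK.
by move=> /addrI /oppr_inj.
Qed.

Lemma CSNC_unit_unipotent u :
  CSNC R -> unitP u -> exists r, Defs.nilp r /\ u = 1 + r.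
Proof.
move=> csnc u_unit.
have u_clean : clean u by exists 0, u; rewrite /idem mulr0 add0r.
have [e [q [ee [[N qN] [uE eq]]]]] := csnc u u_clean.
have compl_uN : (1 - e) * u ^+ N = 0.
  by rewrite uE exprD_idem_nil // mulrA mul_compl_idem // mul0r.
have e1 : e = 1.
  apply/eqP; rewrite eq_sym -subr_eq0; apply/eqP.
  by rewrite -(mulrK (unitrX N u_unit) (1 - e)) compl_uN mul0r.
by exists q; split; [exists N | rewrite uE e1].
Qed.

End Rings.

Theorem mainTheorem15 (R : unitRingType) : CSNC R -> NCSUC R.
Proof.
move=> csnc a [e [q [ee [q_nil aE]]]].
have a1_clean : clean (a - 1).
  exists e, (q - 1); split=> //; split; last by rewrite aE addrA.
  by rewrite /unitP -opprB unitrN; apply/unitr1D_nilp/nilpN.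
have [g [p [gg [p_nil [a1E gp]]]]] := csnc _ a1_clean.
have a_eq : a = 1 + (g + p) by rewrite -a1E addrC subrK.
exists g; split.
  split=> //; split.
    by rewrite /unitP a_eq addrCA addrC addrK; apply: unitr1D_nilp.
  by rewrite a_eq mulrDl mulrDr mul1r mulr1 mulrDl mulrDr gg gp.
move=> f ff af_unit af.
have [r [r_nil afE]] := CSNC_unit_unipotent csnc af_unit.
have rE : r = a - f - 1 by rewrite afE addrC addKr.
have fr : GRing.comm f r.
  rewrite rE; apply: commrB; last exact: commr1.
  by apply: commrB; [exact: commr_sym | exact: commr_refl].
apply: (snc_idem_unique ff fr r_nil gg gp p_nil).
by rewrite -a1E rE addrCA addrA addrNK.
Qed.
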